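(* Let $r\in\mathbb{C}$ and let $m,n$ be positive integers. Then $$\sum_{k=0}^n(-1)^k\binom{r-1}{k}\sum_{j=m}^{k+1}\binom{k}{j-1}\frac{s(j,m)}{j!}=(-1)^n\binom{r-1}{n}\frac{1}{m!}H_{n+1}(m)-\frac{1}{m!}\sum_{k=0}^n(-1)^k\binom{r}{k}H_k(m).$$ In particular, $\sum_{k=0}^n\frac{(-1)^k}{k+1}\binom{r-1}{k}=(-1)^n\binom{r-1}{n}H_{n+1}-\sum_{k=0}^n(-1)^k\binom{r}{k}H_k$.
   Context: For integers $m\ge 1$, $n\ge 0$, the multiple harmonic-like numbers are $H_n(m)=\sum_{1\le k_1+k_2+\cdots+k_m\le n}\frac{1}{k_1k_2\cdots k_m}$ (sum over positive integers $k_1,\dots,k_m$), with $H_n(0)=1$ for $n\ge 0$ and $H_0(m)=0$ for $m\ge1$. $H_n=H_n(1)=\sum_{k=1}^n\frac1k$. The (signed) Stirling numbers of the first kind $s(n,k)$ are defined by $\sum_{n\ge k}s(n,k)\frac{z^n}{n!}=\frac{\ln^k(1+z)}{k!}$, with $s(n,k)=0$ for $n<k$. For complex $x$, $\binom{x}{k}=\frac{x(x-1)\cdots(x-k+1)}{k!}$. *)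

From mathcomp Require Import all_boot all_algebra.
From mathcomp Require Export reals complex.
Set Implicit Arguments. Unset Strict Implicit. Unset Printing Implicit Defensive.
Import GRing.Theory Num.Theory.
Local Open Scope ring_scope.

Definition gbinom (F : fieldType) (x : F) (k : nat) : F :=
  (\prod_(i < k) (x - i%:R)) / (k`!)%:R.

(* Signed Stirling numbers of the first kind, via the standard recurrence
   s(0,0)=1, s(0,k+1)=0, s(n+1,0)=0, s(n+1,k+1) = s(n,k) - n s(n,k+1),
   equivalently sum_{n>=k} s(n,k) z^n/n! = ln^k(1+z)/k!. *)
Fixpoint stirling1 (n k : nat) : int :=
  match n, k with
  | 0, 0 => 1
  | 0, _.+1 => 0
  | _.+1, 0 => 0
  | n'.+1, k'.+1 => stirling1 n' k' - (n'%:Z) * stirling1 n' k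
  end.

(* Tuples are encoded as finite functions 'I_m -> 'I_n.+1
   (each positive k_i with sum <= n is automatically <= n). *)
Definition Hm (F : fieldType) (m n : nat) : F :=
  \sum_(f : {ffun 'I_m -> 'I_n.+1} |
          [forall i, (0 < f i)%N] && (\sum_(i < m) (f i : nat) <= n)%N)
     (\prod_(i < m) ((f i : nat)%:R : F))^-1.

Definition harm (F : fieldType) (n : nat) : F :=
  \sum_(1 <= k < n.+1) (k%:R : F)^-1.

(* The inner sum on the left is |s(k+1,m)|/(k+1)!, the coefficient of x^m in
   x(x+1)...(x+k)/(k+1)!: expand this rising factorial in the falling
   factorials x(x-1)...(x-j+1), whose coefficients are the s(j,m), with the Lah
   numbers C(k,j-1)(k+1)!/j! as weights.  On the other hand m!|s(s,m)|/s! is the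
   coefficient of x^s in (-log(1-x))^m = (x + x^2/2 + x^3/3 + ...)^m, and
   H_n(m) is the sum of these coefficients for s <= n, so the inner sum equals
   (H_{k+1}(m) - H_k(m))/m!.  Both identities are then instances of the
   summation by parts
     sum_k (-1)^k C(r-1,k) (h_{k+1} - h_k)
       = (-1)^n C(r-1,n) h_{n+1} - sum_k (-1)^k C(r,k) h_k   (h_0 = 0),
   which telescopes by Pascal's rule C(r,k+1) = C(r-1,k+1) + C(r-1,k). *)

From mathcomp Require Import all_boot all_algebra.
From mathcomp Require Import reals complex ring zify.
Import GRing.Theory Num.Theory.
Local Open Scope ring_scope.

Section GeneralizedBinomial.
Variable F : numFieldType.

Lemma natr_fact_neq0 n : (n`!)%:R != 0 :> F.
Proof. by rewrite pnatr_eq0 -lt0n fact_gt0. Qed.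

Lemma gbinom0 (x : F) : gbinom x 0 = 1.
Proof. by rewrite /gbinom big_ord0 fact0 divr1. Qed.

Lemma gbinomS (x : F) k : gbinom x k.+1 = gbinom (x - 1) k.+1 + gbinom (x - 1) k.
Proof.
rewrite /gbinom big_ord_recl big_ord_recr /= subr0.
have -> : \prod_(i < k) (x - (bump 0 i)%:R) = \prod_(i < k) (x - 1 - i%:R).
  by apply: eq_bigr => i _; rewrite /bump leq0n add1n -natr1; ring.
rewrite factS natrM; field.
by rewrite natr_fact_neq0 addrC natr1 pnatr_eq0.
Qed.

Lemma alternating_gbinom_sum_by_parts (x : F) (h : nat -> F) n : h 0%N = 0 ->
  \sum_(0 <= k < n.+1) (-1) ^+ k * gbinom (x - 1) k * (h k.+1 - h k) =
  (-1) ^+ n * gbinom (x - 1) n * h n.+1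
   - \sum_(0 <= k < n.+1) (-1) ^+ k * gbinom x k * h k.
Proof.
move=> h0; elim: n => [|n IHn].
  by rewrite !big_nat1 !expr0 !gbinom0 h0; ring.
rewrite [LHS]big_nat_recr //= IHn [in RHS]big_nat_recr //= (gbinomS x n) exprS.
ring.
Qed.

End GeneralizedBinomial.

Section FactorialPolynomials.
Variable R : comNzRingType.

Definition falling_poly (j : nat) : {poly R} := \prod_(i < j) ('X - (i%:R)%:P).
Definition rising_poly (n : nat) : {poly R} := \prod_(i < n) ('X + (i%:R)%:P).

Lemma coef_falling_poly j m : (falling_poly j)`_m = (stirling1 j m)%:~R.
Proof.
elim: j m => [|j IHj] m; first by rewrite /falling_poly big_ord0 coef1; case: m.
rewrite /falling_poly big_ord_recr /= -/(falling_poly j) mulrBr coefB coefMX coefMC.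
case: m => [|m] /=; rewrite !IHj.
  by rewrite sub0r; case: j {IHj} => [|j] /=; rewrite ?mulr0 ?mul0r ?oppr0.
by rewrite intrB intrM mulrC.
Qed.

Lemma coef_rising_poly0 n : (rising_poly n)`_0 = (n == 0%N)%:R.
Proof.
case: n => [|n]; first by rewrite /rising_poly big_ord0 coef1.
by rewrite /rising_poly big_ord_recl addr0 coefXM.
Qed.

Lemma coef_rising_polyS n m :
  (rising_poly n.+1)`_m.+1 = (rising_poly n)`_m + n%:R * (rising_poly n)`_m.+1.
Proof.
rewrite /rising_poly big_ord_recr /= mulrDr coefD coefMX coefMC.
by rewrite mulrC.
Qed.

Lemma falling_poly_mulXaddC j (c : R) :
  falling_poly j * ('X + c%:P) = falling_poly j.+1 + (c + j%:R) *: falling_poly j.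
Proof.
rewrite /falling_poly big_ord_recr /= -mul_polyC (mulrC _%:P) -mulrDr.
by congr (_ * _); rewrite polyCD; ring.
Qed.

End FactorialPolynomials.

Lemma stirling1_small j m : (j < m)%N -> stirling1 j m = 0.
Proof.
elim: j m => [|j IHj] [|m] //= ltjm.
by rewrite !IHj ?mulr0 ?subr0 // ltnW.
Qed.

Section LahNumbers.
Variable F : numFieldType.

(* lah k j is the Lah number L(k+1, j) = C(k, j-1) (k+1)!/j!. *)
Definition lah (k j : nat) : F :=
  if j is j'.+1 then 'C(k, j')%:R * (k.+1)`!%:R / (j'.+1)`!%:R else 0.

Lemma lah0 k : lah k 0 = 0. Proof. by []. Qed.

Lemma lahS k j : lah k.+1 j.+1 = lah k j + (j + k + 2)%:R * lah k j.+1.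
Proof.
case: j => [|j].
  by rewrite /lah !bin0 add0r !mul1r !divr1 [(k.+2)`!]factS natrM add0n addn2.
have bin_step : 'C(k, j.+1)%:R = (k%:R - j%:R) * 'C(k, j)%:R / j.+1%:R :> F.
  have jS_neq0 : j.+1%:R != 0 :> F by rewrite pnatr_eq0.
  apply: (mulIf jS_neq0); rewrite divfK // mulrC -natrM mul_bin_left.
  case: (leqP j k) => [lejk | ltkj]; first by rewrite natrM natrB.
  by rewrite bin_small // muln0 mulr0.
rewrite /lah binS natrD bin_step !factS !natrM.
rewrite -[k.+2]addn2 -[j.+2]addn2 -[k.+1]addn1 -[j.+1]addn1 !natrD.
by field; rewrite natr_fact_neq0 !lt0r_neq0 // ltr_wpDl.
Qed.

Lemma rising_poly_lah k :
  rising_poly F k.+1 = \sum_(0 <= j < k.+2) lah k j *: falling_poly F j.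
Proof.
elim: k => [|k IHk].
  rewrite big_nat_recl // big_nat1 /lah /= scale0r add0r.
  rewrite /rising_poly /falling_poly !big_ord1 bin0 mul1r divff ?natr_fact_neq0 //.
  by rewrite scale1r subr0 addr0.
rewrite /rising_poly big_ord_recr /= -/(rising_poly F k.+1) IHk mulr_suml.
rewrite (eq_bigr (fun j => lah k j *: falling_poly F j.+1 +
   (lah k j * ((k.+1)%:R + j%:R)) *: falling_poly F j)); last first.
  by move=> j _; rewrite -scalerAl falling_poly_mulXaddC scalerDr scalerA.
rewrite big_split /= [in RHS]big_nat_recl // lah0 scale0r add0r.
under [in RHS]eq_bigr => j _ do rewrite lahS scalerDl.
rewrite big_split /=; congr (_ + _).
rewrite big_nat_recl // lah0 mul0r scale0r add0r.
rewrite [in RHS]big_nat_recr //= bin_small // !mul0r mulr0 scale0r addr0.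
apply: eq_bigr => j _; rewrite mulrC -natrD.
by congr (_%:R * _ *: _); lia.
Qed.

Lemma sum_binom_stirling1 k m : (0 < m)%N ->
  \sum_(m <= j < k.+2) 'C(k, j.-1)%:R * ((stirling1 j m)%:~R / (j`!)%:R)
  = (rising_poly F k.+1)`_m / (k.+1)`!%:R.
Proof.
move=> m_gt0; rewrite rising_poly_lah coef_sum mulr_suml.
rewrite (big_nat_widenl _ 0 _ _ _ (leq0n m)) big_mkcond /=.
apply: eq_bigr => -[|j] _.
  by rewrite leqn0 (gtn_eqF m_gt0) lah0 scale0r coef0 mul0r.
rewrite coefZ coef_falling_poly; case: (leqP m j.+1) => lemj.
  by rewrite /lah /=; field; rewrite !natr_fact_neq0.
by rewrite stirling1_small // mulr0 mul0r.
Qed.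

End LahNumbers.

Section LogarithmPowers.
Variable F : numFieldType.

(* The truncation of -log(1-x) = x + x^2/2 + ...; its constant term is
   0^-1 = 0. *)
Definition logser (N : nat) : {poly F} := \poly_(i < N) (i%:R)^-1.

(* The coefficient of x^s in (-log(1-x))^m, by iterated convolution. *)
Fixpoint logpow_coef (m s : nat) : F :=
  if m is m'.+1 then \sum_(i < s.+1) (i%:R)^-1 * logpow_coef m' (s - i)
  else (s == 0%N)%:R.

Lemma coef_logser_exp m s N : (s < N)%N -> (logser N ^+ m)`_s = logpow_coef m s.
Proof.
elim: m s => [|m IHm] s ltsN /=; first by rewrite expr0 coef1.
rewrite exprS coefM; apply: eq_bigr => i _.
rewrite IHm ?coef_poly; last exact: leq_ltn_trans (leq_subr _ _) ltsN.
by rewrite (leq_ltn_trans _ ltsN) // -ltnS.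
Qed.

Lemma Hm_logpow_coef m n : Hm F m n = \sum_(s < n.+1) logpow_coef m s.
Proof.
under [RHS]eq_bigr => s _ do rewrite -(coef_logser_exp m _ _ (ltn_ord s)).
rewrite -[m in logser _ ^+ m]card_ord -prodr_const /logser poly_def bigA_distr_bigA /=.
under eq_bigr => s _ do rewrite coef_sum.
rewrite exchange_big /= /Hm big_mkcond /=; apply: eq_bigr => f _.
have -> : \prod_(i < m) ((f i : nat)%:R^-1 *: 'X^(f i)) =
    (\prod_(i < m) (f i : nat)%:R^-1) *: 'X^(\sum_(i < m) (f i : nat)) :> {poly F}.
  rewrite (big_morph _ (exprD 'X) (expr0 'X)) -mul_polyC rmorph_prod -big_split.
  by apply: eq_bigr => i _; exact: (esym (mul_polyC _ _)).
under [RHS]eq_bigr => s _ do rewrite coefZ coefXn mulrb.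
rewrite -mulr_sumr -big_mkcond (big_ord1_eq _ (fun=> 1)) ltnS prodfV.
case: (boolP [forall i, (0 < f i)%N]) => [_ | ] /=.
  by case: (_ <= n)%N; rewrite ?mulr1 ?mulr0.
case/forallPn => i; rewrite lt0n negbK => /eqP fi0.
by rewrite (bigD1 i) //= fi0 mul0r invr0 mul0r.
Qed.

Lemma logpow_coef0 m : logpow_coef m 0 = (m == 0%N)%:R.
Proof. by case: m => [|m] //=; rewrite big_ord1 invr0 mul0r. Qed.

Lemma coef_onesubX_deriv_logser N i : (i.+1 < N)%N ->
  ((1 - 'X) * (logser N)^`())`_i = (i == 0%N)%:R.
Proof.
have coef_deriv_logser j : (j.+1 < N)%N -> ((logser N)^`())`_j = 1.
  move=> ltjN; rewrite coef_deriv coef_poly ltjN.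
  by rewrite -[X in X = 1]mulr_natr mulVf ?pnatr_eq0.
move=> ltiN; rewrite mulrBl mul1r coefB coefXM coef_deriv_logser //.
case: i ltiN => [|i] ltiN /=; first by rewrite subr0.
by rewrite coef_deriv_logser ?subrr // ltnW.
Qed.

(* Read off the coefficient of x^n in (1 - x) ((-log(1-x))^(m+1))' in two
   ways, using (1 - x) (-log(1-x))' = 1. *)
Lemma logpow_coef_rec m n :
  n.+1%:R * logpow_coef m.+1 n.+1 =
  n%:R * logpow_coef m.+1 n + m.+1%:R * logpow_coef m n.
Proof.
pose Q := logser n.+2.
have coefQ j s : (s < n.+2)%N -> (Q ^+ j)`_s = logpow_coef j s.
  exact: coef_logser_exp.
have lhs : ((1 - 'X) * (Q ^+ m.+1)^`())`_n =
    n.+1%:R * logpow_coef m.+1 n.+1 - n%:R * logpow_coef m.+1 n.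
  rewrite mulrBl mul1r coefB coefXM !coef_deriv coefQ // !mulr_natl.
  case: eqP => [-> | /eqP n_neq0]; first by rewrite mulr0n subr0.
  by rewrite prednK ?lt0n // coefQ.
have rhs : ((1 - 'X) * (Q ^+ m.+1)^`())`_n = m.+1%:R * logpow_coef m n.
  rewrite deriv_exp /= mulrnAr coefMn mulrA coefM big_ord_recl big1 => [|i _].
    by rewrite coef_onesubX_deriv_logser // mul1r subn0 coefQ // addr0 mulr_natl.
  by rewrite coef_onesubX_deriv_logser ?mul0r //= /bump /=; have := ltn_ord i; lia.
by rewrite -rhs lhs addrC subrK.
Qed.

Lemma logpow_coef_fact m n :
  logpow_coef m n * n`!%:R = m`!%:R * (rising_poly F n)`_m.
Proof.
elim: n m => [|n IHn] [|m].
- by rewrite /rising_poly big_ord0 coef1 /= !mulr1.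
- by rewrite logpow_coef0 /rising_poly big_ord0 coef1 /= mul0r mulr0.
- by rewrite coef_rising_poly0 /= mul0r mulr0.
rewrite factS natrM mulrA (mulrC _ n.+1%:R) logpow_coef_rec mulrDl -!mulrA IHn.
by rewrite mulrCA IHn coef_rising_polyS factS natrM; ring.
Qed.

Lemma Hm0 m : (0 < m)%N -> Hm F m 0 = 0.
Proof.
by move=> m_gt0; rewrite Hm_logpow_coef big_ord1 logpow_coef0 (gtn_eqF m_gt0).
Qed.

Lemma Hm_increment m n :
  Hm F m n.+1 - Hm F m n = m`!%:R * (rising_poly F n.+1)`_m / n.+1`!%:R.
Proof.
rewrite !Hm_logpow_coef big_ord_recr /= addrC addrK -logpow_coef_fact.
by rewrite mulfK ?natr_fact_neq0.
Qed.

End LogarithmPowers.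

Theorem theorem9 (R : realType) (r : R[i]) (m n : nat) (hm : (0 < m)%N) (hn : (0 < n)%N) :
  \sum_(0 <= k < n.+1)
     (-1) ^+ k * gbinom (r - 1) k *
     \sum_(m <= j < k.+2)
        ('C(k, j.-1))%:R * ((stirling1 j m)%:~R / (j`!)%:R)
  = (-1) ^+ n * gbinom (r - 1) n * ((m`!)%:R)^-1 * Hm _ m n.+1
    - ((m`!)%:R)^-1 * \sum_(0 <= k < n.+1) (-1) ^+ k * gbinom r k * Hm _ m k
  /\
  \sum_(0 <= k < n.+1) (-1) ^+ k / (k.+1)%:R * gbinom (r - 1) k
  = (-1) ^+ n * gbinom (r - 1) n * harm _ n.+1
    - \sum_(0 <= k < n.+1) (-1) ^+ k * gbinom r k * harm _ k.
Proof.
pose h k : R[i] := ((m`!)%:R)^-1 * Hm _ m k.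
have inner_sum k :
    \sum_(m <= j < k.+2) 'C(k, j.-1)%:R * ((stirling1 j m)%:~R / j`!%:R) =
    h k.+1 - h k.
  rewrite sum_binom_stirling1 // -mulrBr Hm_increment -!mulrA mulKf //.
  exact: natr_fact_neq0.
split.
  under eq_bigr => k _ do rewrite inner_sum.
  rewrite alternating_gbinom_sum_by_parts /h ?Hm0 ?mulr0 // mulrA.
  by congr (_ - _); rewrite mulr_sumr; apply: eq_bigr => k _; rewrite mulrCA.
have harm_step k : (-1) ^+ k / k.+1%:R * gbinom (r - 1) k =
    (-1) ^+ k * gbinom (r - 1) k * (harm _ k.+1 - harm _ k).
  by rewrite /harm big_nat_recr //= addrC addrK mulrAC.
under eq_bigr => k _ do rewrite harm_step.
by rewrite alternating_gbinom_sum_by_parts // /harm big_geq.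
Qed.
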